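(* Let $\omega\ge2$ and let $\Gamma$ be a finite simple graph that is $\omega$-clique regular and a non-boring $\mathrm{srg}(n,k,\lambda,\mu)$. Then $\Gamma$ and $C_\omega(\Gamma)$ are strongly regular graphs with the same parameters if and only if $k=\omega(\omega-1)$.
   Context: A graph is $\omega$-clique regular if it has a nonempty edge set and every edge lies in exactly one clique of order $\omega$. $C_\omega(\Gamma)$ has as vertices the cliques of order $\omega$ of $\Gamma$, two distinct ones adjacent iff they have nonempty intersection. $\mathrm{srg}(n,k,\lambda,\mu)$: $n$ vertices, $k$-regular, adjacent vertices have $\lambda$ common neighbours, distinct non-adjacent vertices have $\mu$ common neighbours. An srg is boring if it has at most two distinct adjacency eigenvalues, non-boring otherwise. *)

From mathcomp Require Import all_boot all_order all_algebra algC.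
Set Implicit Arguments. Unset Strict Implicit. Unset Printing Implicit Defensive.
Import GRing.Theory Num.Theory.

(* A finite simple graph: vertex finType T, adjacency e : rel T,
   assumed symmetric and irreflexive (as hypotheses of the theorem). *)

Section Defs.
Variable T : finType.
Variable e : rel T.

Definition is_clique (S : {set T}) : bool :=
  [forall x in S, forall y in S, (x != y) ==> e x y].

Definition is_wclique (w : nat) (S : {set T}) : bool :=
  is_clique S && (#|S| == w).

Definition clique_regular (w : nat) : Prop :=
  (exists x y, e x y) /\
  forall x y, e x y ->
    #|[set S : {set T} | is_wclique w S && (x \in S) && (y \in S)]| = 1.

Definition clq (w : nat) := {S : {set T} | is_wclique w S}.

Definition clq_adj (w : nat) : rel (clq w) :=
  fun A B => (A != B) && (val A :&: val B != set0).

Definition is_srg (n k l m : nat) : Prop :=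
  [/\ #|T| = n,
      forall x, #|[set y | e x y]| = k,
      forall x y, e x y -> #|[set z | e x z && e y z]| = l &
      forall x y, x != y -> ~~ e x y -> #|[set z | e x z && e y z]| = m].

Definition adjmx : 'M[algC]_#|T| :=
  \matrix_(i, j) ((e (enum_val i) (enum_val j))%:R)%R.

Definition boring : Prop :=
  exists a b : algC, forall c, eigenvalue adjmx c -> c = a \/ c = b.

End Defs.

Definition Cgraph (T : finType) (e : rel T) (w : nat) : rel (clq e w) :=
  clq_adj (e:=e) (w:=w).

(* Let N be the vertex-clique incidence matrix of the graph, so that N^T N is
   the adjacency matrix of C_w plus w I, since two distinct w-cliques share at
   most one vertex.  Counting (vertex, neighbour, clique) triples gives
   n k = |C_w| w (w - 1); hence equal orders force k = w (w - 1).  Conversely,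
   if k = w (w - 1) then every vertex lies in exactly w cliques, |C_w| = n,
   N N^T = A + w I and all line sums of N are w.  The srg identity
   A^2 = (l - m) A + (k - m) I + m J turns into a quadratic identity p(N N^T) = 0
   with a J-term.  The symmetric matrix X = p(N^T N) then satisfies X N^T = 0,
   so X kills N^T N and J and X^2 is a multiple of X, while tr X = 0 because
   N N^T and N^T N have the same size and the same traces of powers; so
   tr X^2 = 0 and X = 0, which is the srg identity for C_w. *)

From mathcomp Require Import all_boot all_order all_algebra algC.
From mathcomp Require Import ring.
Set Implicit Arguments. Unset Strict Implicit. Unset Printing Implicit Defensive.
Import GRing.Theory Num.Theory.

Section SrgResidual.
Variable R : realDomainType.
Local Open Scope ring_scope.

Definition srg_resid n (c d mu : R) (M : 'M[R]_n) : 'M[R]_n :=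
  M *m M - c *: M - d%:M - mu *: const_mx 1.

Lemma srg_resid_eq0 n (c d mu : R) (M : 'M[R]_n) :
  (srg_resid c d mu M = 0) <-> (M *m M = c *: M + d%:M + mu *: const_mx 1).
Proof.
have -> : srg_resid c d mu M = M *m M - (c *: M + d%:M + mu *: const_mx 1).
  by rewrite /srg_resid !opprD !addrA.
by split=> [/eqP | ->]; [rewrite subr_eq0 => /eqP | rewrite subrr].
Qed.

Lemma srg_resid_shift n (c d mu s : R) (A : 'M[R]_n) :
  srg_resid (c + s *+ 2) (d - c * s - s ^+ 2) mu (A + s%:M) =
  srg_resid c d mu A.
Proof.
rewrite /srg_resid mulmxDl !mulmxDr mul_mx_scalar mul_scalar_mx -scalar_mxM.
by apply/matrixP => i j; rewrite !mxE; ring.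
Qed.

Lemma mxtrace_srg_resid n (c d mu : R) (M : 'M[R]_n) :
  \tr (srg_resid c d mu M) = \tr (M *m M) - c * \tr M - (d + mu) *+ n.
Proof.
rewrite !raddfB /= !mxtraceZ mxtrace_scalar.
have -> : \tr (const_mx 1 : 'M[R]_n) = n%:R.
  by rewrite /mxtrace (eq_bigr (fun _ => 1)) ?sumr_const ?card_ord // => i _; rewrite mxE.
by rewrite mulr_natr mulrnDl opprD addrA.
Qed.

Lemma sym_mx_tr_sqr_eq0 n (X : 'M[R]_n) : X^T = X -> \tr (X *m X) = 0 -> X = 0.
Proof.
move=> XT trXX; apply/matrixP => i j; rewrite mxE.
have sum_sqr : \sum_i \sum_j X i j ^+ 2 = 0.
  apply: etrans trXX; apply: eq_bigr => i2 _; rewrite mxE; apply: eq_bigr => j2 _.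
  by rewrite expr2; congr (_ * _); rewrite -{1}XT mxE.
have row0 i' : \sum_j X i' j ^+ 2 = 0.
  by apply: (psumr_eq0P _ sum_sqr) => // i2 _; apply: sumr_ge0 => j2 _; apply: sqr_ge0.
apply/eqP; rewrite -sqrf_eq0; apply/eqP.
by apply: (psumr_eq0P _ (row0 i)) => // j2 _; apply: sqr_ge0.
Qed.

Section GramTransfer.
Variables (p q : nat) (N : 'M[R]_(p, q)) (w c d mu : R).
Hypotheses (eq_pq : p = q) (w_neq0 : w != 0).
Hypothesis rowN : forall r, N *m (const_mx 1 : 'M_(q, r)) = w *: const_mx 1.
Hypothesis colN : forall r, N^T *m (const_mx 1 : 'M_(p, r)) = w *: const_mx 1.
Hypothesis residNNt : srg_resid c d mu (N *m N^T) = 0.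

Let X := srg_resid c d mu (N^T *m N).

Lemma gram_resid_mul_trmx : X *m N^T = 0.
Proof.
have constNt : (const_mx 1 : 'M_q) *m N^T = w *: const_mx 1.
  by rewrite -[LHS]trmxK trmx_mul trmxK trmx_const rowN linearZ /= trmx_const.
have /srg_resid_eq0 sqrY := residNNt.
rewrite /X /srg_resid !mulmxBl -!scalemxAl mul_scalar_mx constNt.
rewrite -!mulmxA !(mulmxA N) sqrY !mulmxDr -!scalemxAr mul_mx_scalar colN.
by apply/matrixP => i j; rewrite !mxE; ring.
Qed.

Lemma gram_resid_mul_const : X *m (const_mx 1 : 'M_q) = 0.
Proof.
have : w *: (X *m (const_mx 1 : 'M_q)) = 0.
  by rewrite scalemxAr -colN mulmxA gram_resid_mul_trmx mul0mx.
by move/eqP; rewrite scalemx_eq0 (negPf w_neq0) => /eqP.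
Qed.

Lemma gram_resid_sqr : X *m X = - d *: X.
Proof.
have XB : X *m (N^T *m N) = 0 by rewrite mulmxA gram_resid_mul_trmx mul0mx.
rewrite {2}/X /srg_resid !mulmxBr (mulmxA X) XB mul0mx -!scalemxAr XB.
by rewrite gram_resid_mul_const mul_mx_scalar !scaler0 !subr0 sub0r scaleNr.
Qed.

Lemma gram_resid_tr : \tr X = 0.
Proof.
have trB : \tr (N^T *m N) = \tr (N *m N^T) by rewrite mxtrace_mulC.
have trBB : \tr (N^T *m N *m (N^T *m N)) = \tr (N *m N^T *m (N *m N^T)).
  by rewrite mulmxA mxtrace_mulC !mulmxA.
have := congr1 mxtrace residNNt; rewrite mxtrace_srg_resid linear0.
have -> : (d + mu) *+ p = (d + mu) *+ q by rewrite eq_pq.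
move=> trY; apply: etrans _ trY.
by apply: etrans (mxtrace_srg_resid _ _ _ _) _; rewrite trB trBB.
Qed.

Lemma srg_resid_trmx_mul : srg_resid c d mu (N^T *m N) = 0.
Proof.
apply: sym_mx_tr_sqr_eq0.
  by rewrite /srg_resid !linearB /= !linearZ /= !trmx_mul trmxK tr_scalar_mx trmx_const.
by rewrite gram_resid_sqr mxtraceZ gram_resid_tr mulr0.
Qed.

End GramTransfer.

End SrgResidual.

Lemma card_set_sum (U : finType) (P : pred U) :
  #|[set u | P u]| = (\sum_(u : U) P u)%N.
Proof. by rewrite -sum1dep_card big_mkcond; apply: eq_bigr => u _; case: (P u). Qed.

Lemma card_set_enum_val (U : finType) (P : pred U) :
  #|[set u | P u]| = (\sum_(i < #|U|) P (enum_val i))%N.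
Proof. by rewrite card_set_sum -(big_enum_val (A := U) (fun u => P u : nat)). Qed.

Section RelationMatrix.
Variable R : nzSemiRingType.
Local Open Scope ring_scope.

Definition relmx (U V : finType) (r : U -> V -> bool) : 'M[R]_(#|U|, #|V|) :=
  \matrix_(i, j) (r (enum_val i) (enum_val j))%:R.

Lemma mul_relmx (U V W : finType) (r : U -> V -> bool) (s : V -> W -> bool) i j :
  (relmx r *m relmx s) i j = #|[set y | r (enum_val i) y && s y (enum_val j)]|%:R.
Proof.
rewrite card_set_enum_val natr_sum !mxE; apply: eq_bigr => y _.
by rewrite !mxE -natrM mulnb.
Qed.

Lemma relmx_mul_const (U V : finType) (r : U -> V -> bool) n i j :
  (relmx r *m (const_mx 1 : 'M[R]_(#|V|, n))) i j = #|[set y | r (enum_val i) y]|%:R.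
Proof.
rewrite card_set_enum_val natr_sum !mxE; apply: eq_bigr => y _.
by rewrite !mxE mulr1.
Qed.

Lemma trmx_relmx (U V : finType) (r : U -> V -> bool) :
  (relmx r)^T = relmx (fun y x => r x y).
Proof. by apply/matrixP => i j; rewrite !mxE. Qed.

End RelationMatrix.

Arguments relmx {R U V} r.

Section SrgMatrix.
Variables (R : realDomainType) (T : finType) (r : rel T).
Hypotheses (rsym : symmetric r) (rirr : irreflexive r).
Local Open Scope ring_scope.

Lemma is_srgE n k l m :
  is_srg r n k l m <-> #|T| = n /\
    forall x y, #|[set z | r x z && r y z]| = if x == y then k else if r x y then l else m.
Proof.
split=> [[cardT deg_k adj_l nadj_m] | [cardT common]].
  split=> // x y; case: eqVneq => [<- | neq_xy].
    by rewrite -(deg_k x); apply: eq_card => z; rewrite !inE andbb.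
  by case: ifP => [/adj_l | /negbT /(nadj_m _ _ neq_xy)].
split=> // [x | x y rxy | x y neq_xy nrxy].
- by have := common x x; rewrite eqxx => <-; apply: eq_card => z; rewrite !inE andbb.
- have neq_xy : x != y by apply: contraTneq rxy => ->; rewrite rirr.
  by rewrite common (negPf neq_xy) rxy.
- by rewrite common (negPf neq_xy) (negPf nrxy).
Qed.

Lemma srg_resid_relmx_eq0 k l m :
  srg_resid (l%:R - m%:R) (k%:R - m%:R) m%:R (relmx r : 'M[R]_#|T|) = 0 <->
  forall x y, #|[set z | r x z && r y z]| = if x == y then k else if r x y then l else m.
Proof.
have entry x y : (l%:R - m%:R) * (r x y)%:R + (k%:R - m%:R) *+ (x == y) + m%:R * 1 =
    (if x == y then k else if r x y then l else m)%:R :> R.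
  case: eqVneq => [<- | _]; first by rewrite rirr mulr0 add0r mulr1 subrK.
  by case: (r x y); rewrite mulr0n addr0 ?mulr1 ?mulr0 ?add0r ?subrK.
have common x y : #|[set z | r x z && r z y]| = #|[set z | r x z && r y z]|.
  by apply: eq_card => z; rewrite !inE (rsym z).
rewrite srg_resid_eq0 -matrixP; split=> [sqrA x y | common_xy i j].
  have := sqrA (enum_rank x) (enum_rank y).
  rewrite mul_relmx !mxE !enum_rankK (inj_eq enum_rank_inj) entry common.
  by move/eqP; rewrite eqr_nat => /eqP.
rewrite mul_relmx !mxE -(inj_eq enum_val_inj) entry common.
by rewrite common_xy.
Qed.

Lemma is_srg_relmxP n k l m :
  is_srg r n k l m <-> #|T| = n /\
    srg_resid (l%:R - m%:R) (k%:R - m%:R) m%:R (relmx r : 'M[R]_#|T|) = 0.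
Proof. by rewrite is_srgE srg_resid_relmx_eq0. Qed.

End SrgMatrix.

Section CliqueIncidence.
Variables (T : finType) (e : rel T) (w : nat).

Local Notation C := (clq e w).
Local Notation adjC := (@Cgraph T e w).

Lemma clq_adj_mem (L : C) x y : x \in val L -> y \in val L -> x != y -> e x y.
Proof.
case: L => S /= /andP[/forall_inP clqS _] xS yS neq_xy.
by have /forall_inP/(_ y yS) := clqS x xS; rewrite neq_xy.
Qed.

Lemma card_clq (L : C) : #|val L| = w.
Proof. by case: L => S /= /andP[_ /eqP]. Qed.

Lemma Cgraph_sym : symmetric adjC.
Proof. by move=> L M; rewrite /Cgraph /clq_adj eq_sym setIC. Qed.

Lemma Cgraph_irr : irreflexive adjC.
Proof. by move=> L; rewrite /Cgraph /clq_adj eqxx. Qed.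

Hypothesis creg : clique_regular e w.

Definition ncliques x y := #|[set L : C | (x \in val L) && (y \in val L)]|.

Lemma ncliques_edge x y : e x y -> ncliques x y = 1%N.
Proof.
move=> exy; case: creg => _ /(_ x y exy) <-.
rewrite /ncliques -(card_imset _ val_inj); apply: eq_card => S.
rewrite [in RHS]inE; apply/imsetP/idP => [[L] | /andP[/andP[wS xS] yS]].
  by rewrite inE => /andP[xL yL] ->; case: L xL yL => S' /= -> -> ->.
by exists (exist _ S wS); rewrite // inE /= xS yS.
Qed.

Lemma ncliques_neq x y : x != y -> ncliques x y = e x y.
Proof.
move=> neq_xy; case exy: (e x y); first exact: ncliques_edge.
apply/eqP; rewrite cards_eq0; apply/eqP/setP => L; rewrite !inE.
by apply/negP => /andP[xL yL]; rewrite (clq_adj_mem xL yL neq_xy) in exy.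
Qed.

Lemma card_clqI (L M : C) : L != M -> #|val L :&: val M| = adjC L M.
Proof.
move=> neq_LM; rewrite /Cgraph /clq_adj neq_LM /=.
have [-> | meet] := eqVneq (val L :&: val M) set0; first by rewrite cards0.
apply/eqP; rewrite eqn_leq card_gt0 meet andbT; apply/card_le1_eqP => y x.
rewrite !inE => /andP[yL yM] /andP[xL xM]; apply/eqP; apply: contraNT neq_LM => neq_xy.
have /eqP/cards1P [S setS] := ncliques_edge (clq_adj_mem xL yL neq_xy).
have : L \in [set S] by rewrite -setS inE xL yL.
have : M \in [set S] by rewrite -setS inE xM yM.
by rewrite !inE => /eqP -> /eqP ->.
Qed.

Hypothesis eirr : irreflexive e.

Lemma card_nbrs_ncliques x : #|[set y | e x y]| = (ncliques x x * (w - 1))%N.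
Proof.
have nbr_sum y : e x y = (\sum_(L : C) [&& x \in val L, y \in val L & y != x])%N :> nat.
  have [-> | neq_yx] := eqVneq y x.
    by rewrite eirr big1 // => L _ /=; rewrite !andbF.
  have neq_xy : x != y by rewrite eq_sym.
  rewrite -(ncliques_neq neq_xy) /ncliques card_set_sum.
  by apply: eq_bigr => L _ /=; rewrite andbT.
rewrite card_set_sum (eq_bigr _ (fun y _ => nbr_sum y)) exchange_big /=.
rewrite /ncliques card_set_sum big_distrl /=; apply: eq_bigr => L _.
case xL: (x \in val L); last by rewrite big1.
rewrite -[w in (w - 1)%N](card_clq L) (cardsD1 x) xL add1n subn1 mul1n /=.
by rewrite card_set_sum; apply: eq_bigr => y _; rewrite !inE andbC.
Qed.

Lemma sum_ncliques_diag : (\sum_x ncliques x x = #|{: C}| * w)%N.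
Proof.
rewrite -sum_nat_const /ncliques; under eq_bigr do rewrite card_set_sum.
rewrite exchange_big /=; apply: eq_bigr => L _.
rewrite -card_set_sum; apply: etrans (card_clq L).
by apply: eq_card => x; rewrite !inE andbb.
Qed.

Lemma card_mul_degree k :
  (forall x, #|[set y | e x y]| = k) -> (#|T| * k = #|{: C}| * (w * (w - 1)))%N.
Proof.
move=> deg_k.
have -> : (#|T| * k = \sum_x ncliques x x * (w - 1))%N.
  by rewrite -sum_nat_const; apply: eq_bigr => x _; rewrite -(deg_k x) card_nbrs_ncliques.
by rewrite -big_distrl /= sum_ncliques_diag mulnA.
Qed.

Variable R : nzSemiRingType.
Local Open Scope ring_scope.

Definition incmx : 'M[R]_(#|T|, #|{: C}|) := relmx (fun x (L : C) => x \in val L).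

Lemma incmx_mul_trmx :
  (forall x, ncliques x x = w) -> incmx *m incmx^T = relmx e + w%:R%:M.
Proof.
move=> diag_w; apply/matrixP => i j; rewrite trmx_relmx mul_relmx !mxE.
rewrite -[#|_|]/(ncliques _ _) -(inj_eq enum_val_inj).
have [<- | neq_ij] := eqVneq; first by rewrite diag_w eirr add0r.
by rewrite ncliques_neq // addr0.
Qed.

Lemma trmx_incmx_mul : incmx^T *m incmx = relmx adjC + w%:R%:M.
Proof.
apply/matrixP => i j; rewrite trmx_relmx mul_relmx !mxE -(inj_eq enum_val_inj).
have [<- | neq_ij] := eqVneq.
  have -> : #|[set x | (x \in val (enum_val i)) && (x \in val (enum_val i))]| =
            #|val (enum_val i)| by apply: eq_card => x; rewrite !inE andbb.
  by rewrite Cgraph_irr add0r card_clq.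
by rewrite addr0 -card_clqI.
Qed.

Lemma incmx_mul_const n :
  (forall x, ncliques x x = w) -> incmx *m (const_mx 1 : 'M_(_, n)) = w%:R *: const_mx 1.
Proof.
move=> diag_w; apply/matrixP => i j; rewrite relmx_mul_const !mxE mulr1.
have -> : #|[set L : C | enum_val i \in val L]| = ncliques (enum_val i) (enum_val i).
  by apply: eq_card => L; rewrite !inE andbb.
by rewrite diag_w.
Qed.

Lemma trmx_incmx_mul_const n :
  incmx^T *m (const_mx 1 : 'M_(_, n)) = w%:R *: const_mx 1.
Proof.
apply/matrixP => i j; rewrite trmx_relmx relmx_mul_const !mxE mulr1.
have -> : #|[set x | x \in val (enum_val i)]| = #|val (enum_val i)|.
  by apply: eq_card => x; rewrite !inE.
by rewrite card_clq.
Qed.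

End CliqueIncidence.

Section RegularCliqueGraph.
Variables (T : finType) (e : rel T) (w : nat).
Hypotheses (esym : symmetric e) (eirr : irreflexive e) (w_gt1 : 1 < w).
Hypothesis creg : clique_regular e w.

Lemma ncliques_diag_regular :
  (forall x, #|[set y | e x y]| = w * (w - 1)) -> forall x, ncliques e w x x = w.
Proof.
move=> deg_w x; have := card_nbrs_ncliques creg eirr x; rewrite deg_w => /eqP.
by rewrite eqn_pmul2r ?subn_gt0 // eq_sym => /eqP.
Qed.

Lemma card_clq_regular :
  (forall x, #|[set y | e x y]| = w * (w - 1)) -> #|{: clq e w}| = #|T|.
Proof.
move=> deg_w; have /eqP := card_mul_degree creg eirr deg_w.
by rewrite eqn_pmul2r ?muln_gt0 ?subn_gt0 ?w_gt1 ?(ltnW w_gt1) // => /eqP.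
Qed.

Lemma srg_clique_graph n l m :
  is_srg e n (w * (w - 1)) l m -> is_srg (@Cgraph T e w) n (w * (w - 1)) l m.
Proof.
move=> srgT; have [_ deg_w _ _] := srgT.
move/(is_srg_relmxP int esym eirr): srgT => [cardT residA].
apply/(is_srg_relmxP int (@Cgraph_sym T e w) (@Cgraph_irr T e w)); split.
  by rewrite card_clq_regular.
rewrite -(srg_resid_shift _ _ _ w%:R%R) -(trmx_incmx_mul creg).
apply: (srg_resid_trmx_mul (p := #|T|) (w := w%:R%R)).
- by rewrite card_clq_regular.
- by rewrite pnatr_eq0 -lt0n (ltnW w_gt1).
- by move=> r; apply: incmx_mul_const; exact: ncliques_diag_regular.
- exact: trmx_incmx_mul_const.
- by rewrite incmx_mul_trmx ?srg_resid_shift //; exact: ncliques_diag_regular.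
Qed.

End RegularCliqueGraph.

Theorem corollary4 (T : finType) (e : rel T) (w n k l m : nat) :
  symmetric e -> irreflexive e ->
  2 <= w ->
  clique_regular e w ->
  is_srg e n k l m ->
  ~ boring e ->
  (is_srg (@Cgraph T e w) n k l m <-> k = w * (w - 1)).
Proof.
move=> esym eirr w_gt1 creg srgT _.
split=> [[cardC _ _ _] | kE]; last by rewrite kE in srgT *; exact: srg_clique_graph.
have [cardT deg_k _ _] := srgT.
have n_gt0 : 0 < n.
  by rewrite -cardT; case: creg => [[x _]] _; apply/card_gt0P; exists x.
have /eqP := card_mul_degree creg eirr deg_k.
by rewrite cardT cardC eqn_pmul2l // => /eqP.
Qed.
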